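(* Let $A$ be a binary $n\times m$ matrix with $R_{binary}(A)=k$ whose binary base graph has at least two (distinct) sources $U_1$ and $U_2$; regard $U_1$ and $U_2$ as $n\times k$ matrices whose columns are the vectors of the respective bases. Let $d$ be a positive integer and let $A''$ be the block matrix with $d$ block rows obtained by appending to $I_d\otimes A$ (the block-diagonal matrix with $d$ copies of $A$ on the diagonal and zeros elsewhere) the matrix $I_d\otimes (U_1\,|\,U_2)$, i.e. $A''=(I_d\otimes A\;|\;I_d\otimes(U_1|U_2))$, where the $i$-th block row contains $A$ in the $i$-th diagonal block of the first part and $(U_1|U_2)$ in the $i$-th block of the second part. Then $R_{binary}(A'')\ge kd+d$.
   Context: $R_{binary}(M)$ for a binary $p\times q$ matrix $M$ is the least $r$ with $M=UV$, $U\in\{0,1\}^{p\times r}$, $V\in\{0,1\}^{r\times q}$, ordinary arithmetic. A set $X$ of $\{0,1\}$-vectors spans a vector $y$ (binary sense) if $y=\sum_{x\in X}c_xx$ with $c_x\in\{0,1\}$ and ordinary addition; it spans a set $Y$ if it spans each vector in $Y$. A binary base of $A$ is a set of $\{0,1\}$ column vectors spanning every column of $A$, of minimum cardinality among such spanning sets. The binary base graph of $A$ is the directed graph whose vertices are the binary bases of $A$, with an edge from base $U$ to a different base $V$ whenever $U$ spans $V$. A source is a vertex with no incoming edges. $(M|N)$ denotes horizontal concatenation and $\otimes$ the Kronecker product. *)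

From HB Require Import structures.
From mathcomp Require Import all_boot all_order all_algebra.
Set Implicit Arguments. Unset Strict Implicit. Unset Printing Implicit Defensive.
Import Order.TTheory GRing.Theory Num.Theory.
Local Open Scope ring_scope.

(* A {0,1}-matrix with integer entries (ordinary arithmetic is that of int). *)
Definition is_binary_mx (p q : nat) (M : 'M[int]_(p, q)) : Prop :=
  forall i j, M i j = 0 \/ M i j = 1.

Definition binary_factorizable (p q : nat) (M : 'M[int]_(p, q)) (r : nat) : Prop :=
  exists (U : 'M[int]_(p, r)) (V : 'M[int]_(r, q)),
    [/\ is_binary_mx U, is_binary_mx V & M = U *m V].

Definition is_binary_rank (p q : nat) (M : 'M[int]_(p, q)) (r : nat) : Prop :=
  binary_factorizable M r /\ (forall r', binary_factorizable M r' -> (r <= r')%N).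

(* {0,1}-vectors are represented as boolean column vectors; their integer
   image is used for ordinary arithmetic. *)
Definition intv (n : nat) (x : 'cV[bool]_n) : 'cV[int]_n :=
  map_mx (fun b : bool => (b : nat)%:Z) x.

Definition bspans (n : nat) (X : {set 'cV[bool]_n}) (y : 'cV[int]_n) : Prop :=
  exists2 S : {set 'cV[bool]_n}, S \subset X & \sum_(x in S) intv x = y.

Definition bspans_all_columns (n m : nat) (X : {set 'cV[bool]_n})
    (A : 'M[int]_(n, m)) : Prop :=
  forall j : 'I_m, bspans X (col j A).

Definition bspans_set (n : nat) (X Y : {set 'cV[bool]_n}) : Prop :=
  forall y, y \in Y -> bspans X (intv y).

Definition is_binary_base (n m : nat) (A : 'M[int]_(n, m))
    (X : {set 'cV[bool]_n}) : Prop :=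
  bspans_all_columns X A /\
  (forall Y : {set 'cV[bool]_n}, bspans_all_columns Y A -> (#|X| <= #|Y|)%N).

Definition base_graph_edge (n m : nat) (A : 'M[int]_(n, m))
    (U V : {set 'cV[bool]_n}) : Prop :=
  [/\ is_binary_base A U, is_binary_base A V, U <> V & bspans_set U V].

Definition is_source (n m : nat) (A : 'M[int]_(n, m))
    (U : {set 'cV[bool]_n}) : Prop :=
  is_binary_base A U /\ (forall V, ~ base_graph_edge A V U).

Definition col_set (n k : nat) (U : 'M[bool]_(n, k)) : {set 'cV[bool]_n} :=
  [set col j U | j : 'I_k].

Definition intm (p q : nat) (M : 'M[bool]_(p, q)) : 'M[int]_(p, q) :=
  map_mx (fun b : bool => (b : nat)%:Z) M.

Definition kron_id (d p q : nat) (B : 'M[int]_(p, q))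
    : 'M[int]_(\sum_(i < d) p, \sum_(i < d) q) :=
  \mxblock_(i < d, j < d) (if i == j then B else 0).

Definition Asecond (n m k d : nat) (A : 'M[int]_(n, m)) (U1 U2 : 'M[bool]_(n, k))
    : 'M[int]_(\sum_(i < d) n, \sum_(i < d) m + \sum_(i < d) (k + k)) :=
  row_mx (kron_id d A) (kron_id d (row_mx (intm U1) (intm U2))).

From HB Require Import structures.
From mathcomp Require Import all_boot all_order all_algebra.
Set Implicit Arguments. Unset Strict Implicit. Unset Printing Implicit Defensive.
Import Order.TTheory GRing.Theory Num.Theory.
Local Open Scope ring_scope.

(* Let A'' = U V be a binary factorisation of inner size r.  Since A'' is
   block diagonal with nonnegative factors, an inner index t whose column of U
   meets the i-th block row and whose row of V is nonzero meets no other block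
   row: otherwise an off-diagonal zero of A'' would receive a positive term.
   In the i-th block row, the distinct {0,1}-vectors carried by these indices
   span every column of A, U1 and U2 (a {0,1} column of U V cannot use the
   same nonzero vector twice).  Were there at most k = R_binary(A) of them,
   they would form a binary base spanning both sources, hence equal to each
   of them, contradicting U1 <> U2.  So every block row owns at least k + 1
   inner indices of its own, and r >= d (k + 1). *)

Section SpanningSets.
Variables (n m : nat) (A : 'M[int]_(n, m)).

Lemma binary_factorizable_card (X : {set 'cV[bool]_n}) :
  bspans_all_columns X A -> binary_factorizable A #|X|.
Proof.
move=> XA.
have [S SX] : exists S : 'I_m -> {set 'cV[bool]_n},
    forall c, S c \subset X /\ \sum_(x in S c) intv x = col c A.
  apply: (@fin_all_exists _ (fun _ => {set 'cV[bool]_n})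
    (fun c S => S \subset X /\ \sum_(x in S) intv x = col c A)) => c.
  by have [S ? ?] := XA c; exists S.
exists (\matrix_(a < n, j < #|X|) intv (enum_val j) a 0),
       (\matrix_(j < #|X|, c < m) ((enum_val j \in S c) : nat)%:Z).
split.
- by move=> a j; rewrite !mxE; case: (enum_val j a 0); [right | left].
- by move=> j c; rewrite !mxE; case: (_ \in _); [right | left].
apply/matrixP => a c; have [SXc SAc] := SX c.
have -> : A a c = col c A a 0 by rewrite mxE.
rewrite -SAc summxE !mxE.
transitivity (\sum_(x in X) intv x a 0 * ((x \in S c) : nat)%:Z).
  rewrite [RHS](big_setID (S c)) /= (setIidPr SXc) [X in _ + X]big1 ?addr0.
    by apply: eq_bigr => x ->; rewrite mulr1.
  by move=> x /setDP[_ /negbTE ->]; rewrite mulr0.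
rewrite (big_enum_val (A := mem X) (fun x => intv x a 0 * ((x \in S c) : nat)%:Z)).
by apply: eq_bigr => j _; rewrite !mxE.
Qed.

Lemma binary_rank_le_card k X :
  is_binary_rank A k -> bspans_all_columns X A -> (k <= #|X|)%N.
Proof. by move=> [_ rk_min] /binary_factorizable_card; apply: rk_min. Qed.

Lemma binary_base_of_card_le k W :
  is_binary_rank A k -> bspans_all_columns W A -> (#|W| <= k)%N ->
  is_binary_base A W.
Proof.
by move=> rk WA Wk; split=> // Y YA; apply: leq_trans Wk (binary_rank_le_card rk YA).
Qed.

Lemma source_eq_spanning_base U W :
  is_source A U -> is_binary_base A W -> bspans_set W U -> W = U.
Proof.
move=> [bU no_edge] bW WU; apply/eqP/negPn/negP => /eqP W_neq_U.
by apply: (no_edge W); split.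
Qed.

Lemma two_sources_card_lt k U1 U2 W :
  is_binary_rank A k -> is_source A U1 -> is_source A U2 -> U1 <> U2 ->
  bspans_all_columns W A -> bspans_set W U1 -> bspans_set W U2 ->
  (k < #|W|)%N.
Proof.
move=> rk s1 s2 U12 WA WU1 WU2; rewrite ltnNge; apply/negP => Wk.
have bW := binary_base_of_card_le rk WA Wk.
by rewrite -(source_eq_spanning_base s1 bW WU1) (source_eq_spanning_base s2 bW WU2)
  in U12.
Qed.

End SpanningSets.

Lemma bool_cV_neq0P n (x : 'cV[bool]_n) : reflect (exists a, x a 0) (x != 0).
Proof.
apply: (iffP idP) => [x_neq0 | [a xa]]; last by apply: contraTneq xa => ->; rewrite mxE.
apply/existsP; apply: contraNT x_neq0 => /existsPn x0.
by apply/eqP/matrixP => a j; rewrite (ord1 j) !mxE; apply/negbTE/x0.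
Qed.

Section SumsOfBinaryVectors.
Variables (n : nat) (I : finType) (P : pred I) (f : I -> 'cV[bool]_n).
Hypothesis sum_binary : is_binary_mx (\sum_(t | P t) intv (f t)).

Lemma sum_intv_binary_inj : {in [set t | P t & f t != 0] &, injective f}.
Proof.
move=> t t'; rewrite !inE => /andP[Pt /bool_cV_neq0P[a fa]] /andP[Pt' _] ftt'.
apply/eqP/negPn/negP => tt'.
have nonneg (s : I) : 0 <= intv (f s) a 0 by rewrite mxE.
suff : 2 <= (\sum_(s | P s) intv (f s)) a 0 by case: (sum_binary a 0) => ->.
rewrite summxE (bigD1 t) //= (bigD1 t') /=; last by rewrite Pt' eq_sym.
rewrite addrA !mxE -ftt' fa lerDl; exact: sumr_ge0.
Qed.

Lemma bspans_sum_intv :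
  bspans (f @: [set t | P t & f t != 0]) (\sum_(t | P t) intv (f t)).
Proof.
exists (f @: [set t | P t & f t != 0]) => //.
rewrite big_imset /=; last exact: sum_intv_binary_inj.
rewrite [RHS](bigID (fun t => f t == 0)) /= [X in _ = X + _]big1 ?add0r.
  by apply: eq_bigl => t; rewrite inE.
by move=> t /andP[_ /eqP ->]; apply/matrixP => a j; rewrite !mxE.
Qed.

End SumsOfBinaryVectors.

Definition bool_col n r (U : 'M[int]_(n, r)) (t : 'I_r) : 'cV[bool]_n :=
  \col_a (U a t == 1).

Definition active_cols n r q (U : 'M[int]_(n, r)) (V : 'M[int]_(r, q)) :
    {set 'I_r} :=
  [set t | (bool_col U t != 0) && [exists g, V t g == 1]].

Lemma binary_rowsub n n' q (f : 'I_n' -> 'I_n) (M : 'M[int]_(n, q)) :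
  is_binary_mx M -> is_binary_mx (rowsub f M).
Proof. by move=> M_bin a g; rewrite mxE. Qed.

Lemma binary_col n q (g : 'I_q) (M : 'M[int]_(n, q)) :
  is_binary_mx M -> is_binary_mx (col g M).
Proof. by move=> M_bin a j; rewrite mxE. Qed.

Lemma binary_intm p q (M : 'M[bool]_(p, q)) : is_binary_mx (intm M).
Proof. by move=> a g; rewrite mxE; case: (M a g); [right | left]. Qed.

Lemma intv_col n k (U : 'M[bool]_(n, k)) j : intv (col j U) = col j (intm U).
Proof. by apply/matrixP => a b; rewrite !mxE. Qed.

Section BinaryProducts.
Variables (n r q : nat) (U : 'M[int]_(n, r)) (V : 'M[int]_(r, q)).
Hypotheses (U_bin : is_binary_mx U) (V_bin : is_binary_mx V).

Lemma intv_bool_col t : intv (bool_col U t) = col t U.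
Proof. by apply/matrixP => a j; rewrite !mxE; case: (U_bin a t) => ->. Qed.

Lemma col_mul_binary g :
  col g (U *m V) = \sum_(t | V t g == 1) intv (bool_col U t).
Proof.
apply/matrixP => a j; rewrite (ord1 j) summxE [RHS]big_mkcond !mxE.
apply: eq_bigr => t _; rewrite intv_bool_col mxE.
by case: (V_bin t g) => ->; rewrite ?mulr0 ?mulr1.
Qed.

Lemma bspans_col_mul g : is_binary_mx (col g (U *m V)) ->
  bspans (bool_col U @: active_cols U V) (col g (U *m V)).
Proof.
rewrite col_mul_binary => /bspans_sum_intv[S S_sub S_sum]; exists S => //.
apply: subset_trans S_sub (imsetS _ _); apply/subsetP => t.
by rewrite !inE => /andP[Vtg ->]; apply/existsP; exists g.
Qed.

Lemma mul_binary_neq0 a t g : U a t = 1 -> V t g = 1 -> (U *m V) a g != 0.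
Proof.
move=> Uat Vtg; rewrite mxE (bigD1 t) //= Uat Vtg mul1r.
have : 0 <= \sum_(s < r | s != t) U a s * V s g.
  by apply: sumr_ge0 => s _; case: (U_bin a s) => ->; case: (V_bin s g) => ->.
by move=> sum_ge0; rewrite lt0r_neq0 // (lt_le_trans ltr01) // lerDl.
Qed.

End BinaryProducts.

Lemma sum_card_disjoint_le (I T : finType) (F : I -> {set T}) :
  (forall i j x, x \in F i -> x \in F j -> i = j) ->
  (\sum_i #|F i| <= #|T|)%N.
Proof.
move=> F_disj; rewrite -sum1_card.
have -> : (\sum_i #|F i| = \sum_x #|[set i | x \in F i]|)%N.
  under eq_bigr => i _ do rewrite -sum1_card big_mkcond /=.
  rewrite exchange_big /=; apply: eq_bigr => x _.
  by rewrite -big_mkcond -sum1_card; apply: eq_bigl => i; rewrite inE.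
apply: leq_sum => x _; apply/card_le1_eqP => i j.
by rewrite !inE => xi xj; apply: F_disj xj xi.
Qed.

Definition block_ord d n (i : 'I_d) (a : 'I_n) : 'I_(\sum_(i < d) n) :=
  @tagnat.Rank d (fun _ => n) i a.

Lemma block_ord1K d n i a : @tagnat.sig1 d (fun _ => n) (@block_ord d n i a) = i.
Proof. exact: tagnat.Rank1K. Qed.

Lemma block_ord2K d n i a :
  (@tagnat.sig2 d (fun _ => n) (@block_ord d n i a) : 'I_n) = a.
Proof. by apply/val_inj; rewrite tagnat.Rank2K. Qed.

Lemma kron_id_diagE d p q (B : 'M[int]_(p, q)) i a c :
  kron_id d B (block_ord i a) (block_ord i c) = B a c.
Proof. by rewrite /kron_id mxE !block_ord1K eqxx !block_ord2K. Qed.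

Lemma kron_id_neq0 d p q (B : 'M[int]_(p, q)) i a g :
  kron_id d B (block_ord i a) g != 0 -> @tagnat.sig1 d (fun _ => q) g = i.
Proof.
rewrite /kron_id mxE block_ord1K; case: (i =P _) => [<- //|_].
by rewrite mxE eqxx.
Qed.

Section BlockRowsOfAsecond.
Variables (n m k d : nat) (A : 'M[int]_(n, m)) (U1 U2 : 'M[bool]_(n, k)).
Local Notation A'' := (Asecond d A U1 U2).

Lemma Asecond_block_unique i j a b g :
  A'' (block_ord i a) g != 0 -> A'' (block_ord j b) g != 0 -> i = j.
Proof.
rewrite /Asecond -[g]splitK; case: (split g) => g' /=.
  by rewrite !row_mxEl => /kron_id_neq0 <- /kron_id_neq0 <-.
by rewrite !row_mxEr => /kron_id_neq0 <- /kron_id_neq0 <-.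
Qed.

Lemma col_Asecond_A i c :
  col (lshift _ (block_ord i c)) (rowsub (block_ord i) A'') = col c A.
Proof.
by apply/matrixP => a j; rewrite [LHS]mxE [LHS]mxE [RHS]mxE row_mxEl kron_id_diagE.
Qed.

Lemma col_Asecond_U1 i j :
  col (rshift _ (block_ord i (lshift k j))) (rowsub (block_ord i) A'') =
  col j (intm U1).
Proof.
apply/matrixP => a b.
by rewrite [LHS]mxE [LHS]mxE [RHS]mxE row_mxEr kron_id_diagE row_mxEl.
Qed.

Lemma col_Asecond_U2 i j :
  col (rshift _ (block_ord i (rshift k j))) (rowsub (block_ord i) A'') =
  col j (intm U2).
Proof.
apply/matrixP => a b.
by rewrite [LHS]mxE [LHS]mxE [RHS]mxE row_mxEr kron_id_diagE row_mxEr.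
Qed.

End BlockRowsOfAsecond.

Section FactorizationsOfAsecond.
Variables (n m k d r : nat) (A : 'M[int]_(n, m)) (U1 U2 : 'M[bool]_(n, k)).
Variables (U : 'M[int]_(\sum_(i < d) n, r))
          (V : 'M[int]_(r, \sum_(i < d) m + \sum_(i < d) (k + k))).
Local Notation A'' := (Asecond d A U1 U2).
Hypotheses (U_bin : is_binary_mx U) (V_bin : is_binary_mx V) (A''_UV : A'' = U *m V).

Local Notation U_ i := (rowsub (block_ord i) U).

Lemma active_cols_block_unique i j t :
  t \in active_cols (U_ i) V -> t \in active_cols (U_ j) V -> i = j.
Proof.
rewrite !inE => /andP[/bool_cV_neq0P[a Uat] /existsP[g /eqP Vtg]].
move=> /andP[/bool_cV_neq0P[b Ubt] _]; rewrite !mxE in Uat Ubt.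
apply: (@Asecond_block_unique _ _ _ _ A U1 U2 _ _ a b g); rewrite A''_UV.
- exact: (mul_binary_neq0 U_bin V_bin (eqP Uat) Vtg).
- exact: (mul_binary_neq0 U_bin V_bin (eqP Ubt) Vtg).
Qed.

Hypotheses (A_bin : is_binary_mx A) (A_rank : is_binary_rank A k)
           (U1_source : is_source A (col_set U1))
           (U2_source : is_source A (col_set U2))
           (U12 : col_set U1 <> col_set U2).

Lemma active_cols_block_card i : (k < #|active_cols (U_ i) V|)%N.
Proof.
set W := bool_col (U_ i) @: active_cols (U_ i) V.
have block_spans g : is_binary_mx (col g (rowsub (block_ord i) A'')) ->
    bspans W (col g (rowsub (block_ord i) A'')).
  rewrite A''_UV -mul_rowsub_mx.
  by apply: bspans_col_mul => //; apply: binary_rowsub.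
apply: leq_trans (leq_imset_card _ _).
apply: (two_sources_card_lt A_rank U1_source U2_source U12).
- move=> c; rewrite -(col_Asecond_A A U1 U2 i).
  by apply: block_spans; rewrite col_Asecond_A; apply: binary_col.
- move=> _ /imsetP[j _ ->]; rewrite intv_col -(col_Asecond_U1 A U1 U2 i).
  by apply: block_spans; rewrite col_Asecond_U1; apply/binary_col/binary_intm.
- move=> _ /imsetP[j _ ->]; rewrite intv_col -(col_Asecond_U2 A U1 U2 i).
  by apply: block_spans; rewrite col_Asecond_U2; apply/binary_col/binary_intm.
Qed.

End FactorizationsOfAsecond.

Theorem mainTheorem14 (n m k d : nat) (A : 'M[int]_(n, m))
  (U1 U2 : 'M[bool]_(n, k)) :
  is_binary_mx A ->
  is_binary_rank A k ->
  is_source A (col_set U1) ->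
  is_source A (col_set U2) ->
  col_set U1 <> col_set U2 ->
  (0 < d)%N ->
  forall r : nat, binary_factorizable (Asecond d A U1 U2) r -> (k * d + d <= r)%N.
Proof.
move=> A_bin A_rank U1_source U2_source U12 _ r [U [V [U_bin V_bin A''_UV]]].
pose T i := active_cols (rowsub (@block_ord d n i) U) V.
have T_card i : (k < #|T i|)%N.
  exact: (active_cols_block_card U_bin V_bin A''_UV A_bin A_rank
            U1_source U2_source U12).
have T_disj : forall i j t, t \in T i -> t \in T j -> i = j.
  exact: (active_cols_block_unique U_bin V_bin A''_UV).
have := sum_card_disjoint_le T_disj; rewrite card_ord; apply: leq_trans.
have -> : (k * d + d = \sum_(i < d) k.+1)%N.
  by rewrite sum_nat_const card_ord mulnS addnC mulnC.
exact: leq_sum.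
Qed.
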